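(* Let $a_n = \left(\frac23\right)^n p_n\!\left(\frac14\right)$ for $n\ge0$. Then $a_0=1$ and for all $n\ge 0$, \[ 3a_{n+1} = 2a_n + \sum_{k=0}^n\binom{n+1}{k}a_k + 3. \]
   Context: Define polynomial sequences $(p_k(x))_{k\ge -1}$ and $(q_k(x))_{k\ge -1}$ by $p_{-1}(x)=0$, $q_{-1}(x)=1$ and, for $k\ge -1$, $p_{k+1}(x) = 2(kx+1)p_k(x) + 2x(1-x)p_k'(x) + q_k(x)$, $q_{k+1}(x) = (2(k+1)x+1)q_k(x) + 2x(1-x)q_k'(x)$. *)

From HB Require Import structures.
From mathcomp Require Import all_boot all_order all_algebra.
Set Implicit Arguments. Unset Strict Implicit. Unset Printing Implicit Defensive.
Import Order.TTheory GRing.Theory Num.Theory.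
Local Open Scope ring_scope.

(* The paper's sequences (p_k, q_k)_{k >= -1} are indexed from -1.
   We store them shifted by one: pq_shift m = (p_{m-1}, q_{m-1}). *)
Fixpoint pq_shift (m : nat) : {poly rat} * {poly rat} :=
  match m with
  | 0 => (0, 1)
  | m'.+1 =>
      let pk := (pq_shift m').1 in
      let qk := (pq_shift m').2 in
      let k : int := (m'%:Z - 1)%R in
      ((2%:P * (k%:~R *: 'X + 1) * pk + 2%:P * 'X * (1 - 'X) * pk^`() + qk),
       (((2 * m'%:R : rat) *: 'X + 1) * qk + 2%:P * 'X * (1 - 'X) * qk^`()))
  end.

Definition p (n : nat) : {poly rat} := (pq_shift n.+1).1.
Definition q (n : nat) : {poly rat} := (pq_shift n.+1).2.

Definition a (n : nat) : rat := (2 / 3) ^+ n * (p n).[1 / 4].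

From HB Require Import structures.
From mathcomp Require Import all_boot all_order all_algebra.
From mathcomp Require Import ring lra.
Import Order.TTheory GRing.Theory Num.Theory.
Set Implicit Arguments. Unset Strict Implicit. Unset Printing Implicit Defensive.
Local Open Scope ring_scope.

(** Write theta for the operator f |-> 2x(1-x) f', so that the defining
    recurrences read q_{k+1} = (2(k+1)x+1) q_k + theta q_k and
    p_{k+1} = (2kx+2) p_k + theta p_k + q_k.  With w = 2(1-x) and the binomial
    transform T_n(f) = sum_k C(n,k) w^(n-k) f_k, one has
      q_n = x T_n(q) + (1-x) q_{n-1},   p_n = x T_n(p) + (1-x) (p_{n-1} + w^n).
    Indeed theta acts on T_n(f) through the Leibniz rule and theta w^j = -2jx w^j,
    so the defects of both identities satisfy the same recurrences, homogeneous
    for q and driven by the q-defect for p; both vanish at the start.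
    At x = 1/4 we have w = 3/2, and scaling by (2/3)^n turns the identity for p
    into the recurrence for a_n. *)

Section BinomialTransform.
Variables (R : comNzRingType) (w : R).

Definition bintr (f : nat -> R) (n : nat) : R :=
  \sum_(k < n.+1) 'C(n, k)%:R * w ^+ (n - k) * f k.

Lemma sum_binS (F : nat -> R) n :
  \sum_(k < n.+2) 'C(n.+1, k)%:R * F k =
  \sum_(k < n.+1) 'C(n, k)%:R * F k + \sum_(k < n.+1) 'C(n, k)%:R * F k.+1.
Proof.
have -> : \sum_(k < n.+1) 'C(n, k)%:R * F k = \sum_(k < n.+2) 'C(n, k)%:R * F k.
  by rewrite [RHS]big_ord_recr /= bin_small // mul0r addr0.
rewrite big_ord_recl [\sum_(k < n.+2) _]big_ord_recl !bin0 -addrA; congr (_ + _).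
rewrite -big_split /=; apply: eq_bigr => i _.
by rewrite /bump /= binS natrD mulrDl addrC.
Qed.

Lemma bintrS f n : bintr f n.+1 = w * bintr f n + bintr (fun k => f k.+1) n.
Proof.
rewrite /bintr; under eq_bigr => i _ do rewrite -mulrA.
rewrite (sum_binS (fun k => w ^+ (n.+1 - k) * f k)) mulr_sumr.
congr (_ + _); apply: eq_bigr => i _.
  by rewrite subSn -1?ltnS // exprS; ring.
by rewrite subSS !mulrA.
Qed.

End BinomialTransform.

Lemma horner_bintr (R : comNzRingType) (w : {poly R}) f n x :
  (bintr w f n).[x] = bintr w.[x] (fun k => (f k).[x]) n.
Proof.
rewrite /bintr horner_sum; apply: eq_bigr => i _.
by rewrite !hornerM horner_exp -polyC_natr hornerC.
Qed.

Lemma bintr_scale (F : fieldType) (c : F) f n : c != 0 ->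
  c^-1 ^+ n * bintr c f n = \sum_(k < n.+1) 'C(n, k)%:R * (c^-1 ^+ k * f k).
Proof.
move=> c0; rewrite /bintr mulr_sumr; apply: eq_bigr => i _.
have Hi : (i <= n)%N by rewrite -ltnS.
have inv_cancel : c^-1 ^+ (n - i) * c ^+ (n - i) = 1.
  by rewrite -exprMn mulVf // expr1n.
rewrite -{1}(subnK Hi) exprD -[RHS]mulr1 -inv_cancel; ring.
Qed.

Section Theta.
Variable R : comNzRingType.
Implicit Types f g : {poly R}.

Definition theta f : {poly R} := 2%:P * 'X * (1 - 'X) * f^`().

Lemma thetaD f g : theta (f + g) = theta f + theta g.
Proof. by rewrite /theta derivD mulrDr. Qed.

Lemma thetaB f g : theta (f - g) = theta f - theta g.
Proof. by rewrite /theta derivB mulrBr. Qed.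

Lemma thetaM f g : theta (f * g) = theta f * g + f * theta g.
Proof. by rewrite /theta derivM; ring. Qed.

Lemma thetaC c : theta c%:P = 0.
Proof. by rewrite /theta derivC mulr0. Qed.

Lemma theta0 : theta 0 = 0.
Proof. exact: thetaC 0. Qed.

Lemma theta1 : theta 1 = 0.
Proof. by rewrite -polyC1 thetaC. Qed.

Lemma theta_natr k : theta k%:R = 0.
Proof. by rewrite -polyC_natr thetaC. Qed.

Lemma thetaX : theta 'X = 2%:P * 'X * (1 - 'X).
Proof. by rewrite /theta derivX mulr1. Qed.

Lemma theta_1subX : theta (1 - 'X) = - (2%:P * 'X * (1 - 'X)).
Proof. by rewrite thetaB theta1 thetaX sub0r. Qed.

Lemma theta_sum n (F : 'I_n -> {poly R}) :
  theta (\sum_(i < n) F i) = \sum_(i < n) theta (F i).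
Proof. exact: (big_morph theta thetaD theta0). Qed.

Definition wpoly : {poly R} := 2%:P * (1 - 'X).

Lemma theta_wpoly : theta wpoly = - (2 * 'X) * wpoly.
Proof. by rewrite /wpoly thetaM thetaC theta_1subX polyC_natr; ring. Qed.

Lemma theta_wpolyX j : theta (wpoly ^+ j) = - (2 * j%:R * 'X) * wpoly ^+ j.
Proof.
elim: j => [|j IH]; first by rewrite expr0 theta1 mulr0 mul0r oppr0 mul0r.
by rewrite exprS thetaM IH theta_wpoly mulrSr; ring.
Qed.

Lemma theta_bintr (f : nat -> {poly R}) n :
  theta (bintr wpoly f n) =
  \sum_(k < n.+1) 'C(n, k)%:R * wpoly ^+ (n - k) * (theta (f k) - 2 * (n - k)%:R * 'X * f k).
Proof.
rewrite /bintr theta_sum; apply: eq_bigr => i _.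
by rewrite !thetaM theta_natr theta_wpolyX; ring.
Qed.

End Theta.

Arguments wpoly {R}.

Definition pshift m : {poly rat} := (pq_shift m).1.
Definition qshift m : {poly rat} := (pq_shift m).2.

Lemma theta_qshift m :
  theta (qshift m) = qshift m.+1 - (2 * m%:R * 'X + 1) * qshift m.
Proof. by rewrite /qshift /= /theta -mul_polyC rmorphM /= !polyC_natr; ring. Qed.

Lemma theta_pshift m :
  theta (pshift m) = pshift m.+1 - (2 * (m%:R - 1) * 'X + 2) * pshift m - qshift m.
Proof.
by rewrite /pshift /qshift /= /theta -mul_polyC intrB rmorphB /= !polyC_natr; ring.
Qed.

Lemma qshift1 : qshift 1 = 1.
Proof.
have := theta_qshift 0; rewrite [qshift 0]/qshift /= theta1 mulr0 mul0r add0r mulr1.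
by move/eqP; rewrite eq_sym subr_eq0 => /eqP.
Qed.

Lemma pshift1 : pshift 1 = 1.
Proof.
have := theta_pshift 0; rewrite [pshift 0]/pshift [qshift 0]/qshift /= theta0 mulr0 subr0.
by move/eqP; rewrite eq_sym subr_eq0 => /eqP.
Qed.

Lemma theta_bintr_qshift n :
  theta (bintr wpoly (fun k => qshift k.+1) n) =
  bintr wpoly (fun k => qshift k.+2) n
  - (2 * n.+1%:R * 'X + 1) * bintr wpoly (fun k => qshift k.+1) n.
Proof.
rewrite theta_bintr /bintr mulr_sumr -sumrB; apply: eq_bigr => i _.
have -> : n.+1%:R = (n - i)%:R + i.+1%:R :> {poly rat}.
  by rewrite -natrD addnS subnK // -ltnS.
by rewrite theta_qshift; ring.
Qed.

Lemma theta_bintr_pshift n :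
  theta (bintr wpoly (fun k => pshift k.+1) n) =
  bintr wpoly (fun k => pshift k.+2) n
  - (2 * n%:R * 'X + 2) * bintr wpoly (fun k => pshift k.+1) n
  - bintr wpoly (fun k => qshift k.+1) n.
Proof.
rewrite theta_bintr /bintr mulr_sumr -!sumrB; apply: eq_bigr => i _.
have -> : n%:R = (n - i)%:R + i%:R :> {poly rat} by rewrite -natrD subnK // -ltnS.
by rewrite theta_pshift mulrSr; ring.
Qed.

Definition qdefect n : {poly rat} :=
  qshift n.+1 - 'X * bintr wpoly (fun k => qshift k.+1) n - (1 - 'X) * qshift n.

Definition pdefect n : {poly rat} :=
  pshift n.+1 - 'X * bintr wpoly (fun k => pshift k.+1) n
  - (1 - 'X) * (pshift n + wpoly ^+ n).

Lemma qdefectS n :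
  qdefect n.+1 = (2 * n.+1%:R * 'X + 1) * qdefect n + theta (qdefect n).
Proof.
rewrite /qdefect !thetaB !thetaM theta_bintr_qshift theta_1subX thetaX.
by rewrite !theta_qshift bintrS /wpoly !polyC_natr; ring.
Qed.

Lemma pdefectS n :
  pdefect n.+1 = (2 * n%:R * 'X + 2) * pdefect n + theta (pdefect n) + qdefect n.
Proof.
rewrite /pdefect /qdefect !thetaB theta_pshift !thetaM (thetaD (pshift n)) theta_pshift.
rewrite theta_bintr_pshift theta_1subX thetaX theta_wpolyX.
by rewrite bintrS exprS /wpoly !polyC_natr mulrSr; ring.
Qed.

Lemma qdefect_eq0 n : qdefect n = 0.
Proof.
elim: n => [|n IH]; last by rewrite qdefectS IH theta0; ring.
by rewrite /qdefect /bintr big_ord1 qshift1 bin0 subnn expr0 /qshift /=; ring.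
Qed.

Lemma pdefect_eq0 n : pdefect n = 0.
Proof.
elim: n => [|n IH]; last by rewrite pdefectS IH qdefect_eq0 theta0; ring.
by rewrite /pdefect /bintr big_ord1 pshift1 bin0 subnn expr0 /pshift /=; ring.
Qed.

Lemma p_succ_bintr n :
  p n.+1 = 'X * bintr wpoly p n.+1 + (1 - 'X) * (p n + wpoly ^+ n.+1).
Proof. by apply/eqP; rewrite -subr_eq0 opprD addrA -[_ == 0]/(pdefect n.+1 == 0) pdefect_eq0. Qed.

Lemma horner_wpoly_quarter : wpoly.[1 / 4] = 3 / 2 :> rat.
Proof. by rewrite /wpoly hornerM hornerC hornerD hornerN hornerX hornerC. Qed.

Lemma p_succ_at_quarter n :
  (p n.+1).[1 / 4] =
  1 / 4 * bintr (3 / 2) (fun k => (p k).[1 / 4]) n.+1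
  + 3 / 4 * ((p n).[1 / 4] + (3 / 2) ^+ n.+1).
Proof.
rewrite p_succ_bintr; set B := bintr _ _ _; move: (p n) => g.
rewrite hornerD !hornerM (hornerD g) horner_exp /B horner_bintr horner_wpoly_quarter.
by rewrite hornerD hornerN hornerX hornerC; congr (_ * _ + _ * _); field.
Qed.

Theorem proposition3p4 :
  a 0 = 1 /\
  forall n : nat,
    3 * a n.+1 = 2 * a n + \sum_(0 <= k < n.+1) ('C(n.+1, k))%:R * a k + 3.
Proof.
split; first by rewrite /a /p -/(pshift 1) pshift1 expr0 mul1r hornerC.
move=> n; rewrite big_mkord; set S := \sum_(k < n.+1) _.
have sum_recr : \sum_(k < n.+2) 'C(n.+1, k)%:R * a k = S + a n.+1.
  by rewrite big_ord_recr /= binn mul1r.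
have scaled := @bintr_scale _ (3 / 2) (fun k => (p k).[1 / 4]) n.+1 isT.
rewrite invf_div sum_recr in scaled.
have key : a n.+1 = 1 / 4 * (S + a n.+1) + 3 / 4 * (2 / 3 * a n + 1).
  rewrite {1}/a p_succ_at_quarter -scaled /a -(invf_div 2 3) exprVn !exprS.
  by field; rewrite expf_neq0.
lra.
Qed.
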